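(* Let $X$ be a $T_0$-space. If $X$ is $S^{\ast}$-well-filtered, then $X$ is weak well-filtered. If moreover $X$ is coherent, then $X$ is $S^{\ast}$-well-filtered if and only if $X$ is weak well-filtered. In particular, every weak well-filtered KC space is $S^{\ast}$-well-filtered.
   Context: All spaces are $T_0$. The specialization order of $X$ is given by $x\le y$ iff $x\in cl(\{y\})$; ${\uparrow}$ is taken with respect to it; a subset is saturated if it is an upper set in the specialization order. $K(X)$ denotes the set of all nonempty compact saturated subsets of $X$; a family in $K(X)$ is filtered if any two members contain a common member. $X$ is weak well-filtered if for every filtered family $\{K_i\mid i\in I\}\subseteq K(X)$ and every nonempty open $U$, $\bigcap_{i\in I}K_i\subseteq U$ implies $K_i\subseteq U$ for some $i$. $X$ is $S^{\ast}$-well-filtered if for every filtered family $\{K_i\mid i\in I\}\subseteq K(X)$, every $G\in K(X)$ and every nonempty open $U$, $\bigcap_{i\in I}K_i\cap G\subseteq U$ implies $K_i\cap G\subseteq U$ for some $i$. $X$ is coherent if the intersection of any two compact saturated subsets is compact. $X$ is KC if every compact subset of $X$ is closed. *)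

From HB Require Import structures.
From mathcomp Require Import all_boot all_order.
From mathcomp Require Import all_classical all_reals all_analysis.
Set Implicit Arguments. Unset Strict Implicit. Unset Printing Implicit Defensive.
Local Open Scope classical_set_scope.

Section Defs.
Context {T : topologicalType}.

Definition spec_le (x y : T) : Prop := closure [set y] x.

Definition saturated (A : set T) : Prop :=
  forall x y, A x -> spec_le x y -> A y.

Definition inKX (K : set T) : Prop :=
  K !=set0 /\ compact K /\ saturated K.

Definition filtered_KX (F : set (set T)) : Prop :=
  F !=set0 /\ F `<=` inKX /\
  (forall K1 K2, F K1 -> F K2 -> exists2 K3, F K3 & K3 `<=` K1 `&` K2).

Definition weak_well_filtered : Prop :=
  forall (F : set (set T)) (U : set T), filtered_KX F -> open U -> U !=set0 ->
    \bigcap_(K in F) K `<=` U -> exists2 K, F K & K `<=` U.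

Definition Sstar_well_filtered : Prop :=
  forall (F : set (set T)) (G U : set T), filtered_KX F -> inKX G ->
    open U -> U !=set0 ->
    (\bigcap_(K in F) K) `&` G `<=` U -> exists2 K, F K & K `&` G `<=` U.

Definition coherent_space : Prop :=
  forall A B : set T, compact A -> saturated A -> compact B -> saturated B ->
    compact (A `&` B).

Definition KC_space : Prop := forall A : set T, compact A -> closed A.

End Defs.
Arguments weak_well_filtered : clear implicits.
Arguments Sstar_well_filtered : clear implicits.
Arguments coherent_space : clear implicits.
Arguments KC_space : clear implicits.

From mathcomp Require Import all_boot all_order.
From mathcomp Require Import all_classical all_reals all_analysis.
Local Open Scope classical_set_scope.

(* Taking [G] to be a member of the family turns S*-well-filteredness into weak
   well-filteredness. Conversely, in a coherent space the traces [K `&` G] of a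
   filtered family on [G] form again a filtered family in K(X) (unless one of
   them is empty, which settles the claim at once), and their intersection is
   [\bigcap_(K in F) K `&` G]. KC spaces are coherent since a compact set meets
   a closed one in a compact set. *)

Section Traces.
Context {T : topologicalType}.
Implicit Types (F : set (set T)) (A B G : set T).

Lemma saturatedI A B : saturated A -> saturated B -> saturated (A `&` B).
Proof. by move=> sA sB x y [Ax Bx] xy; split; [exact: sA xy|exact: sB xy]. Qed.

Lemma filtered_KX_trace F G : coherent_space T -> filtered_KX F -> inKX G ->
  (forall K, F K -> K `&` G !=set0) -> filtered_KX ((setI^~ G) @` F).
Proof.
move=> coh [[K0 FK0] [FKX filt]] [_ [cG sG]] meetG.
split; first by exists (K0 `&` G); exists K0.
split.
  move=> _ [K FK <-]; have [_ [cK sK]] := FKX _ FK.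
  by split; [exact: meetG|split; [exact: coh|exact: saturatedI]].
move=> _ _ [K1 FK1 <-] [K2 FK2 <-].
have [K3 FK3 sK3] := filt K1 K2 FK1 FK2.
exists (K3 `&` G); first by exists K3.
by move=> x [/sK3 [K1x K2x] Gx].
Qed.

Lemma bigcap_trace F G : F !=set0 ->
  \bigcap_(L in (setI^~ G) @` F) L = (\bigcap_(K in F) K) `&` G.
Proof.
move=> [K0 FK0]; apply/seteqP; split => x.
  move=> capx; split; last by have [] := capx _ (ex_intro2 _ _ K0 FK0 erefl).
  by move=> K FK; have [] := capx _ (ex_intro2 _ _ K FK erefl).
by move=> [capx Gx] _ [K FK <-]; split; [exact: capx|].
Qed.

Lemma Sstar_well_filtered_weak : Sstar_well_filtered T -> weak_well_filtered T.
Proof.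
move=> Sstar F U hF oU U0 capU; have [[K0 FK0] [FKX filt]] := hF.
have [K FK KU] : exists2 K, F K & K `&` K0 `<=` U.
  by apply: Sstar => // [|x [capx _]]; [exact: FKX|exact: capU].
have [K3 FK3 sK3] := filt K K0 FK FK0.
by exists K3 => // x /sK3/KU.
Qed.

Lemma weak_well_filtered_Sstar : coherent_space T ->
  weak_well_filtered T -> Sstar_well_filtered T.
Proof.
move=> coh W F G U hF hG oU U0 capGU.
have [[K FK KG0]|meetG] := pselect (exists2 K, F K & K `&` G = set0).
  by exists K => //; rewrite KG0; exact: sub0set.
have {}meetG K : F K -> K `&` G !=set0.
  by move=> FK; apply/set0P/negP => /eqP KG0; apply: meetG; exists K.
have [_ [K FK <-] KGU] : exists2 L, ((setI^~ G) @` F) L & L `<=` U.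
  apply: W => //; first exact: filtered_KX_trace.
  by rewrite bigcap_trace //; case: hF.
by exists K.
Qed.

Lemma KC_coherent : KC_space T -> coherent_space T.
Proof. by move=> KC A B cA _ cB _; exact: compact_closedI (KC _ cB). Qed.

End Traces.

Theorem mainTheorem7 (T : topologicalType) (hT0 : kolmogorov_space T) :
  (Sstar_well_filtered T -> weak_well_filtered T) /\
  (coherent_space T -> (Sstar_well_filtered T <-> weak_well_filtered T)) /\
  (weak_well_filtered T -> KC_space T -> Sstar_well_filtered T).
Proof.
split; first exact: Sstar_well_filtered_weak.
split.
  move=> coh; split; first exact: Sstar_well_filtered_weak.
  exact: weak_well_filtered_Sstar.
by move=> W /KC_coherent coh; exact: weak_well_filtered_Sstar.
Qed.
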